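(* Let $C=\{x_0(x_1+x_2)+(x_1-x_2)^2=0\}\subset\mathbb{P}^2$. Then: $C$ is strongly concise; $(0:1:1)$ is the only point of $\{x_0=0\}$ with $\operatorname{Hrk}_C=1$; every point $(0:s:t)$ with $(s:t)\notin\{(1:1),(1:-1)\}$ has $\operatorname{Hrk}_C=2$; and the point $(0:1:-1)$ has $\operatorname{Hrk}_C((0:1:-1))=3$ while $\underline{\operatorname{Hrk}}_C((0:1:-1))=2$ (as $C^{\star2}=\mathbb{P}^2$).
   Context: Coordinates $x_0,x_1,x_2$ on $\mathbb{P}^2$, $H_i=\{x_i=0\}$. Hadamard product: $(p_0:p_1:p_2)\star(q_0:q_1:q_2)=(p_0q_0:p_1q_1:p_2q_2)$, defined when not all $p_iq_i$ vanish. $\operatorname{Hrk}_C(q)=\min\{m\mid q=p_1\star\cdots\star p_m,\ p_i\in C\}$. $C\star C$ is the Zariski closure of all defined products of two points of $C$, $C^{\star2}=C\star C$. Border rank $\underline{\operatorname{Hrk}}_C(p)=\min\{m\mid p\in C^{\star m}\}$ where $C^{\star1}=C$. $C$ is strongly concise if for every $i$, $(C\cap H_i)\not\subset\bigcup_{j\ne i}H_j$. *)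

From HB Require Import structures.
From mathcomp Require Import all_boot all_order all_algebra.
From mathcomp Require Import mpoly.
Set Implicit Arguments. Unset Strict Implicit. Unset Printing Implicit Defensive.
Import GRing.Theory.
Local Open Scope ring_scope.

(* Points of P^2 over K are represented by nonzero vectors v : 'I_3 -> K
   (homogeneous coordinates x_0, x_1, x_2); subsets of P^2 by predicates on
   such representatives that are invariant under nonzero scaling. *)
Definition vec3 (K : fieldType) := 'I_3 -> K.

Definition pt (K : fieldType) (a b c : K) : vec3 K :=
  fun i => if nat_of_ord i == 0%N then a else if nat_of_ord i == 1%N then b else c.

Definition nonzero (K : fieldType) (v : vec3 K) : Prop := exists i, v i != 0.

Definition proj_eq (K : fieldType) (v w : vec3 K) : Prop :=
  nonzero v /\ exists c : K, c != 0 /\ forall i, w i = c * v i.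

Definition hadamard (K : fieldType) (v w : vec3 K) : vec3 K := fun i => v i * w i.
Definition hprod (K : fieldType) (m : nat) (ps : 'I_m -> vec3 K) : vec3 K :=
  fun i => \prod_(j < m) ps j i.

Definition curveC (K : fieldType) (v : vec3 K) : Prop :=
  nonzero v /\ v ord0 * (v (inord 1) + v (inord 2)) + (v (inord 1) - v (inord 2)) ^+ 2 = 0.

(* q is the (defined) Hadamard product of m points of S; q nonzero
   forces the product to be defined *)
Definition hprod_of (K : fieldType) (S : vec3 K -> Prop) (m : nat) (q : vec3 K) : Prop :=
  exists ps : 'I_m -> vec3 K, (forall j, S (ps j)) /\ proj_eq (hprod ps) q.

Definition Hrk_is (K : fieldType) (S : vec3 K -> Prop) (q : vec3 K) (m : nat) : Prop :=
  (0 < m)%N /\ hprod_of S m q /\ forall k, (0 < k)%N -> (k < m)%N -> ~ hprod_of S k q.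

Definition zclosure (K : fieldType) (S : vec3 K -> Prop) (v : vec3 K) : Prop :=
  nonzero v /\ forall f : {mpoly K[3]}, (forall w, S w -> f.@[w] = 0) -> f.@[v] = 0.

Definition hpow (K : fieldType) (S : vec3 K -> Prop) (m : nat) : vec3 K -> Prop :=
  if m == 1%N then S else zclosure (fun v => nonzero v /\ hprod_of S m v).

Definition bHrk_is (K : fieldType) (S : vec3 K -> Prop) (q : vec3 K) (m : nat) : Prop :=
  (0 < m)%N /\ hpow S m q /\ forall k, (0 < k)%N -> (k < m)%N -> ~ hpow S k q.

Definition strongly_concise (K : fieldType) (S : vec3 K -> Prop) : Prop :=
  forall i : 'I_3, exists v, S v /\ v i = 0 /\ forall j, j != i -> v j != 0.

From HB Require Import structures.
From mathcomp Require Import all_boot all_order all_algebra.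
From mathcomp Require Import mpoly.
From mathcomp Require Import ring.
Import GRing.Theory.
Local Open Scope ring_scope.
Set Implicit Arguments. Unset Strict Implicit.

(* C is parametrized by t |-> (-2 : t(t+1) : t(t-1)), and the Hadamard product
   of the points with parameters t and u is
   (4 : P(P+1) + PS : P(P+1) - PS) with P = tu, S = t + u.  Solving two
   quadratic equations shows that every point with x0 <> 0 lies in C * C, so
   C * C is dense in P^2.  On the line x0 = 0, C only meets (0:1:1), whence
   rank 1 there means (0:1:1), and (0:1:1) * (a:s:t), with a chosen to put
   (a:s:t) on C, gives rank 2 as soon as s + t <> 0.  If (0:1:-1) were a
   product p * q of two points of C, one factor, say p, would lie on x0 = 0,
   i.e. p = (0:1:1); then q1 = -q2, and the equation of C forces q1 = q2 = 0.
   An explicit product of three points gives rank 3. *)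

Section ProjectivePlane.
Variable K : fieldType.
Implicit Types (a b c : K) (u v w p q r : vec3 K) (S : vec3 K -> Prop).

Lemma ord3_cases (i : 'I_3) : i = ord0 \/ i = inord 1 \/ i = inord 2.
Proof.
case: i => [[|[|[|n]]] lt_i3] //; [left | right; left | right; right];
  by apply: val_inj; rewrite /= ?inordK.
Qed.

Lemma ord3_ind (P : 'I_3 -> Prop) :
  P ord0 -> P (inord 1) -> P (inord 2) -> forall i, P i.
Proof. by move=> P0 P1 P2 i; case: (ord3_cases i) => [->|[->|->]]. Qed.

Lemma pt0 a b c : pt a b c ord0 = a. Proof. by []. Qed.
Lemma pt1 a b c : pt a b c (inord 1) = b. Proof. by rewrite /pt inordK. Qed.
Lemma pt2 a b c : pt a b c (inord 2) = c. Proof. by rewrite /pt inordK. Qed.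

Lemma nonzero_pt a b c : nonzero (pt a b c) <-> [|| a != 0, b != 0 | c != 0].
Proof.
split=> [[i]|]; first by case: (ord3_cases i) => [->|[->|->]]; rewrite ?pt0 ?pt1 ?pt2 => ->;
  rewrite ?orbT.
by case/or3P=> nz; [exists ord0 | exists (inord 1) | exists (inord 2)];
  rewrite ?pt0 ?pt1 ?pt2.
Qed.

Lemma proj_eq_refl v : nonzero v -> proj_eq v v.
Proof. by move=> nz_v; split=> //; exists 1; split=> [|i]; rewrite ?oner_eq0 ?mul1r. Qed.

Lemma proj_eq_sym v w : proj_eq v w -> proj_eq w v.
Proof.
case=> [[i nz_vi] [k [nz_k Dw]]]; split; first by exists i; rewrite Dw mulf_neq0.
by exists k^-1; split=> [|j]; rewrite ?invr_eq0 // Dw mulKf.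
Qed.

Lemma proj_eq_trans u v w : proj_eq u v -> proj_eq v w -> proj_eq u w.
Proof.
case=> nz_u [k [nz_k Dv]] [_ [l [nz_l Dw]]]; split=> //.
by exists (l * k); split=> [|i]; rewrite ?mulf_neq0 // Dw Dv mulrA.
Qed.

Lemma eq_proj_eql u u' w : u =1 u' -> proj_eq u' w -> proj_eq u w.
Proof.
move=> Du [[i nz_i] [k [nz_k Dw]]]; split; first by exists i; rewrite Du.
by exists k; split=> // j; rewrite Du.
Qed.

Lemma proj_eq_eq0 v w i : proj_eq v w -> (w i == 0) = (v i == 0).
Proof. by case=> _ [k [nz_k ->]]; rewrite mulf_eq0 (negbTE nz_k). Qed.

Lemma proj_eq_minor v w i j : proj_eq v w -> v i * w j = w i * v j.
Proof. by case=> _ [k [_ Dw]]; rewrite !Dw mulrCA mulrA. Qed.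

Lemma hadamard_pt a b c a' b' c' :
  hadamard (pt a b c) (pt a' b' c') =1 pt (a * a') (b * b') (c * c').
Proof. by apply: ord3_ind; rewrite /hadamard ?pt0 ?pt1 ?pt2. Qed.

Lemma hprod_of1P S q : hprod_of S 1 q <-> exists2 p, S p & proj_eq p q.
Proof.
split=> [[ps [Sps ps_q]] | [p Sp pq]].
  by exists (ps ord0) => //; apply: eq_proj_eql ps_q => i; rewrite /hprod big_ord1.
by exists (fun=> p); split=> //; apply: eq_proj_eql pq => i; rewrite /hprod big_ord1.
Qed.

Lemma hprod_of2P S r :
  hprod_of S 2 r <-> exists p q, [/\ S p, S q & proj_eq (hadamard p q) r].
Proof.
split=> [[ps [Sps ps_r]] | [p [q [Sp Sq pq_r]]]].
  exists (ps ord0), (ps ord_max); split=> //.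
  apply: eq_proj_eql ps_r => i; rewrite /hprod !big_ord_recl big_ord0 mulr1.
  by congr (_ * ps _ _); apply: val_inj.
exists (fun j : 'I_2 => if val j == 0%N then p else q); split=> [j|].
  by case: ifP.
by apply: eq_proj_eql pq_r => i; rewrite /hprod !big_ord_recl big_ord0 mulr1.
Qed.

Lemma hprod_of3 S p q p' r : S p -> S q -> S p' ->
  proj_eq (hadamard (hadamard p q) p') r -> hprod_of S 3 r.
Proof.
move=> Sp Sq Sp' pqp'_r.
exists (fun j : 'I_3 => if val j == 0%N then p else if val j == 1%N then q else p').
split=> [j|]; first by case: ifP => // _; case: ifP.
by apply: eq_proj_eql pqp'_r => i; rewrite /hprod !big_ord_recl big_ord0 mulr1 mulrA.
Qed.

End ProjectivePlane.

Section CharZero.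
Variable K : fieldType.
Hypothesis K_pchar0 : [pchar K] =i pred0.
Implicit Types (a b c s t : K) (v p q : vec3 K).

Lemma pchar0_natf_eq0 m : (m%:R == 0 :> K) = (m == 0)%N.
Proof. exact: (pcharf0P _).1. Qed.

Lemma pchar0_natr_inj : injective (fun m : nat => m%:R : K).
Proof.
move=> m p /= /eqP; wlog le_mp : m p / (m <= p)%N.
  by move=> wlog_le; case/orP: (leq_total m p) => /wlog_le // + eq_mp;
    rewrite eq_sym => /(_ eq_mp).
rewrite eq_sym -subr_eq0 -natrB // pchar0_natf_eq0 subn_eq0 => le_pm.
by apply/eqP; rewrite eqn_leq le_mp le_pm.
Qed.

Lemma meval_eq0_chart n (k : 'I_n) (f : {mpoly K[n]}) :
  (forall w, w k != 0 -> f.@[w] = 0) -> forall w, f.@[w] = 0.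
Proof.
move=> f_chart v.
pose g : {poly K} := \sum_(m <- msupp f)
  f@_m *: \prod_(i < n) (if i == k then 'X else (v i)%:P) ^+ m i.
have g_eval x : g.[x] = f.@[fun i => if i == k then x else v i].
  rewrite mevalE horner_sum; apply: eq_bigr => m _.
  rewrite hornerZ horner_prod; congr (_ * _); apply: eq_bigr => i _.
  by rewrite horner_exp; case: (i == k); rewrite ?hornerX ?hornerC.
have -> : f.@[v] = g.[v k] by rewrite g_eval; apply: meval_eq => i; case: eqP => [->|].
suff -> : g = 0 by rewrite horner0.
apply: (@roots_geq_poly_eq0 _ _ [seq m.+1%:R | m <- iota 0 (size g)]).
- by apply/allP => _ /mapP [m _ ->]; rewrite /root g_eval f_chart // eqxx pchar0_natf_eq0.
- by rewrite map_inj_uniq ?iota_uniq // => i j /pchar0_natr_inj [].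
- by rewrite size_map size_iota.
Qed.

Lemma curveC_pt a b c : [|| a != 0, b != 0 | c != 0] ->
  a * (b + c) + (b - c) ^+ 2 = 0 -> curveC (pt a b c).
Proof. by move=> /nonzero_pt nz_abc eq_abc; split; rewrite ?pt0 ?pt1 ?pt2. Qed.

Lemma curveC_pt011 : curveC (pt 0 1 1 : vec3 K).
Proof. by apply: curveC_pt; rewrite ?oner_neq0 ?orbT //; ring. Qed.

(* The lines through the point (1:0:0) of C give a rational parametrization. *)
Definition param t : vec3 K := pt (-2) (t * (t + 1)) (t * (t - 1)).

Lemma curveC_param t : curveC (param t).
Proof. by apply: curveC_pt; rewrite ?oppr_eq0 ?pchar0_natf_eq0 //; ring. Qed.

Lemma curveC_x0_eq0 p : curveC p -> p ord0 = 0 -> p (inord 1) = p (inord 2).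
Proof.
by case=> _ + p0; rewrite p0 mul0r add0r => /eqP; rewrite sqrf_eq0 subr_eq0 => /eqP.
Qed.

Lemma curveC_x0_proj p : curveC p -> p ord0 = 0 -> proj_eq p (pt 0 1 1).
Proof.
move=> Cp p0; have p12 := curveC_x0_eq0 Cp p0; case: Cp => nz_p _.
have nz_p1 : p (inord 1) != 0.
  by case: nz_p => i; case: (ord3_cases i) => [->|[->|->]]; rewrite ?p0 ?eqxx // -p12.
split=> //; exists (p (inord 1))^-1; split; first by rewrite invr_eq0.
by apply: ord3_ind; rewrite ?pt0 ?pt1 ?pt2 ?p0 ?mulr0 // -?p12 mulVf.
Qed.

Lemma hprod_of1_x0 v : v ord0 = 0 -> hprod_of (@curveC K) 1 v -> proj_eq v (pt 0 1 1).
Proof.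
move=> v0 /hprod_of1P [p Cp pv].
have p0 : p ord0 = 0 by apply/eqP; rewrite -(proj_eq_eq0 _ pv) v0.
exact: proj_eq_trans (proj_eq_sym pv) (curveC_x0_proj Cp p0).
Qed.

Lemma curveC_opp12 q : curveC q -> q (inord 1) = - q (inord 2) -> q (inord 2) = 0.
Proof.
case=> _ + q12; rewrite q12 addNr mulr0 add0r -opprD sqrrN -mulr2n -mulr_natl.
by move/eqP; rewrite sqrf_eq0 mulf_eq0 pchar0_natf_eq0 /= => /eqP.
Qed.

Lemma curveC_hadamard_x0 p q : curveC p -> curveC q -> p ord0 = 0 ->
  p (inord 1) * q (inord 1) = - (p (inord 2) * q (inord 2)) ->
  p (inord 1) * q (inord 1) = 0.
Proof.
move=> Cp Cq p0; rewrite -(curveC_x0_eq0 Cp p0) => pq_opp.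
have [->|nz_p1] := eqVneq (p (inord 1)) 0; first by rewrite mul0r.
have q12 : q (inord 1) = - q (inord 2) by apply: (mulfI nz_p1); rewrite pq_opp mulrN.
by rewrite q12 (curveC_opp12 Cq q12) oppr0 mulr0.
Qed.

Lemma not_hprod_of1_pt01N1 : ~ hprod_of (@curveC K) 1 (pt 0 1 (-1)).
Proof.
move/(hprod_of1_x0 (pt0 _ _ _))/(proj_eq_minor (inord 1) (inord 2)).
by rewrite !pt1 !pt2 !mul1r => /eqP; rewrite -addr_eq0 (pchar0_natf_eq0 2).
Qed.

Lemma not_curveC_pt01N1 : ~ curveC (pt 0 1 (-1) : vec3 K).
Proof.
move=> C_01N1; apply: not_hprod_of1_pt01N1; apply/hprod_of1P.
by exists (pt 0 1 (-1)); last by apply: proj_eq_refl; case: C_01N1.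
Qed.

Lemma not_hprod_of2_pt01N1 : ~ hprod_of (@curveC K) 2 (pt 0 1 (-1)).
Proof.
case/hprod_of2P => p [q [Cp Cq [_ [k [nz_k D]]]]].
move: (D ord0) (D (inord 1)) (D (inord 2)); rewrite /hadamard pt0 pt1 pt2.
move=> /esym/eqP + D1 D2; rewrite !mulf_eq0 (negbTE nz_k) /=.
have nz_pq1 : p (inord 1) * q (inord 1) != 0.
  by apply: contra_eq_neq D1 => ->; rewrite mulr0 oner_neq0.
have pq_opp : p (inord 1) * q (inord 1) = - (p (inord 2) * q (inord 2)).
  by apply: (mulfI nz_k); rewrite mulrN -D1 -D2 opprK.
case/orP => /eqP x0; move/eqP: nz_pq1; apply.
  exact: curveC_hadamard_x0 Cp Cq x0 pq_opp.
by rewrite mulrC (curveC_hadamard_x0 Cq Cp x0) // mulrC pq_opp mulrC.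
Qed.

Lemma hprod_of3_pt01N1 : hprod_of (@curveC K) 3 (pt 0 1 (-1)).
Proof.
have nz6 : 6 != 0 :> K by rewrite pchar0_natf_eq0.
apply: (hprod_of3 curveC_pt011 (q := pt (-1) 3 6) (p' := pt (-9) 2 (-1))).
- by apply: curveC_pt; rewrite ?oppr_eq0 ?oner_neq0 ?orbT //; ring.
- by apply: curveC_pt; rewrite ?oppr_eq0 ?oner_neq0 ?orbT //; ring.
split; first by exists (inord 1); rewrite /hadamard !pt1 !mul1r mulf_neq0 ?pchar0_natf_eq0.
exists 6^-1; split; first by rewrite invr_eq0.
by apply: ord3_ind; rewrite /hadamard ?pt0 ?pt1 ?pt2; field.
Qed.

Lemma curveC_strongly_concise : strongly_concise (@curveC K).
Proof.
apply: ord3_ind; [exists (pt 0 1 1) | exists (pt (-1) 0 1) | exists (pt (-1) 1 0)];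
  (split; [|split; [by rewrite ?pt0 ?pt1 ?pt2|]]);
  try (apply: ord3_ind; rewrite ?eqxx // ?pt0 ?pt1 ?pt2 ?oppr_eq0 ?oner_neq0 //);
  by [exact: curveC_pt011 | apply: curveC_pt; rewrite ?oppr_eq0 ?oner_neq0 //; ring].
Qed.

Lemma Hrk1_x0 v : nonzero v -> v ord0 = 0 ->
  Hrk_is (@curveC K) v 1 <-> proj_eq v (pt 0 1 1).
Proof.
move=> nz_v v0; split=> [[_ [/(hprod_of1_x0 v0)]] // | v_011].
split=> //; split=> [|[|k] //].
by apply/hprod_of1P; exists (pt 0 1 1); [exact: curveC_pt011 | exact: proj_eq_sym].
Qed.

Lemma Hrk2_x0 s t : nonzero (pt 0 s t) ->
  ~ proj_eq (pt 0 s t) (pt 0 1 1) -> ~ proj_eq (pt 0 s t) (pt 0 1 (-1)) ->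
  Hrk_is (@curveC K) (pt 0 s t) 2.
Proof.
move=> nz_st not_011 not_01N1.
have /nonzero_pt/= nz_s_t := nz_st; rewrite eqxx /= in nz_s_t.
have st_neq0 : s + t != 0.
  apply/eqP => st0; apply: not_01N1.
  have Dt : t = - s by apply/eqP; rewrite -addr_eq0 addrC st0.
  have nz_s : s != 0 by rewrite Dt oppr_eq0 orbb in nz_s_t.
  split=> //; exists s^-1; split; first by rewrite invr_eq0.
  by apply: ord3_ind; rewrite ?pt0 ?pt1 ?pt2 ?mulr0 ?Dt ?mulrN ?mulVf.
split=> //; split=> [|[|[|k]] //]; last by move=> _ _ /(hprod_of1_x0 (pt0 _ _ _)).
apply/hprod_of2P; exists (pt 0 1 1), (pt (- (s - t) ^+ 2 / (s + t)) s t); split.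
- exact: curveC_pt011.
- by apply: curveC_pt; [rewrite nz_s_t orbT | field].
- by apply: eq_proj_eql (hadamard_pt _ _ _ _ _ _) _; rewrite mul0r !mul1r; exact: proj_eq_refl.
Qed.

End CharZero.

Section ClosedField.
Variable K : closedFieldType.
Hypothesis K_pchar0 : [pchar K] =i pred0.

Lemma closed_sum_prod (s p : K) : exists t u : K, t + u = s /\ t * u = p.
Proof.
have [t Dt2] := @solve_monicpoly K 2 (nth 0 [:: - p; s]) isT.
exists t, (s - t); split; first by rewrite addrC subrK.
move: Dt2; rewrite !big_ord_recl big_ord0 /= expr0 expr1 mulr1 addr0 => Dt2.
by rewrite mulrBr -expr2 Dt2; ring.
Qed.

Lemma solve_pronic (D : K) : exists2 P : K, P != 0 & P * (P + 1) = D.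
Proof.
have [t [u []]] := closed_sum_prod (-1) (- D).
wlog nz_t : t u / t != 0 => [wlog_nz tu_sum tu_prod|].
  have [t0|nz_t] := eqVneq t 0; last exact: wlog_nz nz_t tu_sum tu_prod.
  apply: (wlog_nz u t); rewrite 1?addrC 1?mulrC //.
  by rewrite t0 add0r in tu_sum; rewrite tu_sum oppr_eq0 oner_neq0.
move=> tu_sum tu_prod; exists t => //.
have -> : t + 1 = - u by rewrite -[1]opprK -tu_sum; ring.
by rewrite mulrN tu_prod opprK.
Qed.

Lemma solve_param_system (B C : K) : exists t u : K,
  t * u * ((t + 1) * (u + 1)) = B /\ t * u * ((t - 1) * (u - 1)) = C.
Proof.
have nz2 : 2 != 0 :> K by rewrite (pchar0_natf_eq0 K_pchar0).
have [P nz_P DP] := solve_pronic ((B + C) / 2).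
have [t [u [tu_sum tu_prod]]] := closed_sum_prod ((B - C) / (2 * P)) P.
exists t, u.
have -> : t * u * ((t + 1) * (u + 1)) = t * u * (t * u + 1) + t * u * (t + u) by ring.
have -> : t * u * ((t - 1) * (u - 1)) = t * u * (t * u + 1) - t * u * (t + u) by ring.
by rewrite tu_sum tu_prod DP; split; field; rewrite nz2 nz_P.
Qed.

Lemma hprod_of2_x0_neq0 (w : vec3 K) : w ord0 != 0 -> hprod_of (@curveC K) 2 w.
Proof.
move=> nz_w0; have nz4 : 4 != 0 :> K by rewrite (pchar0_natf_eq0 K_pchar0).
have [t [u [DB DC]]] :=
  solve_param_system (4 * w (inord 1) / w ord0) (4 * w (inord 2) / w ord0).
apply/hprod_of2P; exists (param t), (param u); split; try exact: curveC_param.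
apply: eq_proj_eql (hadamard_pt _ _ _ _ _ _) _.
split; first by apply/nonzero_pt; rewrite mulf_neq0 ?oppr_eq0 ?(pchar0_natf_eq0 K_pchar0).
exists (w ord0 / 4); split; first by rewrite mulf_neq0 ?invr_eq0.
apply: ord3_ind; rewrite ?pt0 ?pt1 ?pt2.
- by field.
- by rewrite [t * _ * _]mulrACA DB; field; rewrite nz_w0 nz4.
- by rewrite [t * _ * _]mulrACA DC; field; rewrite nz_w0 nz4.
Qed.

Lemma hpow2_curveC (v : vec3 K) : nonzero v -> hpow (@curveC K) 2 v.
Proof.
move=> nz_v; split=> // f f_prod.
apply: (meval_eq0_chart K_pchar0 (k := ord0 : 'I_3)) => w nz_w0.
by apply: f_prod; split; [exists ord0 | exact: hprod_of2_x0_neq0].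
Qed.

End ClosedField.

Theorem mainTheorem13 (K : closedFieldType) (hchar : [pchar K] =i pred0) :
  strongly_concise (@curveC K)
  /\ (forall v : vec3 K, nonzero v -> v ord0 = 0 ->
        (Hrk_is (@curveC K) v 1 <-> proj_eq v (pt 0 1 1)))
  /\ (forall s t : K, nonzero (pt 0 s t) ->
        ~ proj_eq (pt 0 s t) (pt 0 1 1) -> ~ proj_eq (pt 0 s t) (pt 0 1 (-1)) ->
        Hrk_is (@curveC K) (pt 0 s t) 2)
  /\ Hrk_is (@curveC K) (pt 0 1 (-1)) 3
  /\ bHrk_is (@curveC K) (pt 0 1 (-1)) 2
  /\ (forall v : vec3 K, nonzero v -> hpow (@curveC K) 2 v).
Proof.
split; first exact: curveC_strongly_concise.
split; first exact: Hrk1_x0.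
split; first exact: Hrk2_x0.
split.
  split=> //; split; first exact: hprod_of3_pt01N1.
  by case=> [|[|[|k]]] // _ _; [exact: not_hprod_of1_pt01N1 | exact: not_hprod_of2_pt01N1].
split; last exact: hpow2_curveC.
split=> //; split.
  by apply: hpow2_curveC => //; apply/nonzero_pt; rewrite oner_neq0 orbT.
move=> k k_gt0 k_lt2; have -> : k = 1%N by case: k k_gt0 k_lt2 => [|[|]].
exact: not_curveC_pt01N1.
Qed.
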